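(* Let $\omega=\frac{-1+\sqrt{-3}}{2}$, so that $-\omega$ is a primitive $6$-th root of unity, and let $\zeta_{12}$ be a primitive $12$-th root of unity. Then $$\{\operatorname{Tr}(M) : M\in G_q(-\omega)\}=\{0,\ c,\ \sqrt{3}\,\zeta_{12}\,c,\ 2c : c=(-\omega)^j,\ j=0,1,\dots,5\}.$$ In particular this set of traces is finite.
   Context: Let $q$ be a formal parameter and let $R_q=\begin{pmatrix} q & 1\\ 0 & 1\end{pmatrix}$, $S_q=\begin{pmatrix} 0 & -q^{-1}\\ 1 & 0\end{pmatrix}\in \mathrm{GL}(2,\mathbb{Z}[q,q^{-1}])$. Let $G_q=\langle R_q,S_q\rangle$ be the group they generate. For $\zeta\in\mathbb{C}^*$, set $G_q(\zeta)=\{M_q|_{q=\zeta} : M_q\in G_q\}\subset \mathrm{GL}(2,\mathbb{C})$. *)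

From HB Require Import structures.
From mathcomp Require Import all_boot all_order all_algebra all_field.
Set Implicit Arguments. Unset Strict Implicit. Unset Printing Implicit Defensive.
Import Order.TTheory GRing.Theory Num.Theory.
Local Open Scope ring_scope.

(* Complex numbers are modelled by algC (algebraic complex numbers); all the
   quantities involved (roots of unity, sqrt 3, traces) are algebraic. *)

(* omega = (-1 + sqrt(-3))/2 ; sqrtC picks the root with nonnegative imaginary
   part, so sqrtC (-3) = i*sqrt 3. *)
Definition omega : algC := (-1 + sqrtC (-3)) / 2.

Definition Rmx (z : algC) : 'M[algC]_2 :=
  \matrix_(i < 2, j < 2)
    (if i == 0 :> nat then (if j == 0 :> nat then z else 1)
     else (if j == 0 :> nat then 0 else 1)).

Definition Smx (z : algC) : 'M[algC]_2 :=
  \matrix_(i < 2, j < 2)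
    (if i == 0 :> nat then (if j == 0 :> nat then 0 else - z^-1)
     else (if j == 0 :> nat then 1 else 0)).

Definition gen_at (z : algC) (l : bool * bool) : 'M[algC]_2 :=
  let g := if l.1 then Smx z else Rmx z in
  if l.2 then invmx g else g.

Definition eval_word (z : algC) (w : seq (bool * bool)) : 'M[algC]_2 :=
  foldr (fun l M => gen_at z l *m M) 1%:M w.

(* G_q(z) : specialisations at q = z of all elements of G_q = <R_q, S_q>. *)
Definition Gspec (z : algC) : 'M[algC]_2 -> Prop :=
  fun M => exists w : seq (bool * bool), M = eval_word z w.

From HB Require Import structures.
From mathcomp Require Import all_boot all_order all_algebra all_field.
From mathcomp Require Import ring.

(* At q = -omega = zeta6, the matrices R and S have the common left eigenvector
   (zeta6 - 1, 1), with eigenvalues zeta6 and zeta6^4.  Hence every M in the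
   group has an eigenvalue zeta6^i on that row and, its determinant being a
   power of zeta6 as well, a second eigenvalue zeta6^j; so Tr M = zeta6^i + zeta6^j,
   and S^j R^(i+2j) shows every such pair occurs.  Writing the sum as
   zeta6^i (1 + zeta6^k) and running through k = 0..5 gives 2c, c, 0 or
   (1 + zeta6^5) c; finally sqrt 3 * zeta12 = +-(1 + zeta6^5) zeta6^m, since both
   sides square to 3 zeta6^(+-1). *)

Set Implicit Arguments.
Unset Strict Implicit.
Unset Printing Implicit Defensive.

Import Order.TTheory GRing.Theory Num.Theory.
Local Open Scope ring_scope.

Section TwoByTwo.
Variable F : fieldType.
Implicit Types (A : 'M[F]_2) (v : 'rV[F]_2).

Lemma det_mx22 A : \det A = A 0 0 * A 1 1 - A 0 1 * A 1 0.
Proof.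
rewrite (expand_det_row _ 0) !big_ord_recl big_ord0 /cofactor !det_mx11 !mxE /=.
rewrite expr0 expr1 mul1r mulN1r addr0 mulrN.
by congr (A _ _ * A _ _ - A _ _ * A _ _); apply: val_inj.
Qed.

Lemma mxtrace_mx22 A : \tr A = A 0 0 + A 1 1.
Proof.
rewrite /mxtrace !big_ord_recl big_ord0 addr0.
by congr (A _ _ + A _ _); apply: val_inj.
Qed.

Lemma det_mx22_sub_scalar A (a : F) :
  \det (A - a%:M) = a ^+ 2 - \tr A * a + \det A.
Proof. rewrite !det_mx22 mxtrace_mx22 !mxE /= mulr1n mulr0n !subr0; ring. Qed.

Lemma mxtrace_mx22_eigen A v (a b : F) :
  v != 0 -> a != 0 -> v *m A = a *: v -> \det A = a * b -> \tr A = a + b.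
Proof.
move=> v_nz a_nz vA detA.
have : \det (A - a%:M) = 0.
  by apply/eqP/det0P; exists v; rewrite // mulmxBr mul_mx_scalar vA subrr.
rewrite det_mx22_sub_scalar detA.
have -> : a ^+ 2 - \tr A * a + a * b = a * (a + b - \tr A) by ring.
by move/eqP; rewrite mulf_eq0 (negbTE a_nz) subr_eq0 => /eqP.
Qed.
End TwoByTwo.

Lemma eigen_invmx (F : fieldType) n (A : 'M[F]_n) (v : 'rV[F]_n) a :
  A \in unitmx -> a != 0 -> v *m A = a *: v -> v *m invmx A = a^-1 *: v.
Proof.
move=> A_unit a_nz vA.
by rewrite -[in RHS](mulmxK A_unit v) vA -scalemxAl scalerA mulVf // scale1r.
Qed.

Definition zeta6 : algC := - omega.

Lemma zeta6_sqr : zeta6 ^+ 2 = zeta6 - 1.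
Proof.
have sqrt_m3 : sqrtC (-3) ^+ 2 = -3 :> algC by rewrite sqrtCK.
by rewrite /zeta6 /omega; field: sqrt_m3.
Qed.

Lemma zeta6_cube : zeta6 ^+ 3 = -1.
Proof. by rewrite exprS zeta6_sqr; ring: zeta6_sqr. Qed.

Lemma zeta6_exp6 : zeta6 ^+ 6 = 1.
Proof. by rewrite (exprM _ 3 2) zeta6_cube sqrrN expr1n. Qed.

Lemma zeta6_neq0 : zeta6 != 0.
Proof.
by apply: contra_eq_neq zeta6_exp6 => ->; rewrite expr0n /= eq_sym oner_eq0.
Qed.

Lemma zeta6_expV n : (n <= 6)%N -> (zeta6 ^+ n)^-1 = zeta6 ^+ (6 - n).
Proof. by move=> le_n6; apply: mulr1_eq; rewrite -exprD subnKC // zeta6_exp6. Qed.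

Lemma zeta6_inv : zeta6^-1 = zeta6 ^+ 5.
Proof. by rewrite -(@zeta6_expV 1) ?expr1. Qed.

Definition eigenrow : 'rV[algC]_2 :=
  \row_j (if j == 0 :> nat then zeta6 - 1 else 1).

Lemma eigenrow_neq0 : eigenrow != 0.
Proof. by apply/negP => /eqP /rowP /(_ 1) /eqP; rewrite !mxE /= oner_eq0. Qed.

Lemma eigenrow_Rmx : eigenrow *m Rmx zeta6 = zeta6 *: eigenrow.
Proof.
by apply/rowP => -[[|[|//]] j_lt2]; rewrite !mxE !big_ord_recl big_ord0 !mxE /=;
  ring: zeta6_sqr.
Qed.

Lemma eigenrow_Smx : eigenrow *m Smx zeta6 = zeta6 ^+ 4 *: eigenrow.
Proof.
by apply/rowP => -[[|[|//]] j_lt2];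
  rewrite !mxE !big_ord_recl big_ord0 !mxE /= ?zeta6_inv; ring: zeta6_sqr.
Qed.

Lemma det_Rmx z : \det (Rmx z) = z.
Proof. by rewrite det_mx22 !mxE /=; ring. Qed.

Lemma det_Smx z : \det (Smx z) = z^-1.
Proof. by rewrite det_mx22 !mxE /=; ring. Qed.

(* Letters (is_S, inverted) of R, S, R^-1, S^-1: exponent of the eigenvalue on
   [eigenrow], and of the other eigenvalue. *)
Definition eig_exp (l : bool * bool) : nat :=
  match l with
  | (false, false) => 1 | (true, false) => 4 | (false, true) => 5 | (true, true) => 2
  end.

Definition coeig_exp (l : bool * bool) : nat :=
  match l with (true, false) => 1 | (true, true) => 5 | _ => 0 end.

Lemma eigenrow_gen_at l :
  eigenrow *m gen_at zeta6 l = zeta6 ^+ eig_exp l *: eigenrow /\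
  \det (gen_at zeta6 l) = zeta6 ^+ (eig_exp l + coeig_exp l).
Proof.
have unit_pow n : zeta6 ^+ n != 0 by rewrite expf_neq0 // zeta6_neq0.
have [R_unit S_unit] : Rmx zeta6 \in unitmx /\ Smx zeta6 \in unitmx.
  by rewrite !unitmxE det_Rmx det_Smx zeta6_inv !unitfE unit_pow -[zeta6]expr1.
case: l => -[] []; rewrite /gen_at /= ?det_inv ?det_Smx ?det_Rmx.
- rewrite invrK (eigen_invmx S_unit _ eigenrow_Smx) ?unit_pow // zeta6_expV //.
  by split=> //; rewrite -[RHS](expr_mod _ zeta6_exp6) expr1.
- by rewrite eigenrow_Smx zeta6_inv.
- by rewrite (eigen_invmx R_unit _ eigenrow_Rmx) ?zeta6_inv ?addn0 ?zeta6_neq0.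
- by rewrite eigenrow_Rmx addn0 expr1.
Qed.

Definition word_eig_exp (w : seq (bool * bool)) : nat :=
  (\sum_(l <- w) eig_exp l)%N.
Definition word_coeig_exp (w : seq (bool * bool)) : nat :=
  (\sum_(l <- w) coeig_exp l)%N.

Lemma eigenrow_eval_word w :
  eigenrow *m eval_word zeta6 w = zeta6 ^+ word_eig_exp w *: eigenrow /\
  \det (eval_word zeta6 w) = zeta6 ^+ (word_eig_exp w + word_coeig_exp w).
Proof.
rewrite /word_eig_exp /word_coeig_exp.
elim: w => [|l w [vw detw]]; first by rewrite !big_nil mulmx1 det1 scale1r.
have [vl detl] := eigenrow_gen_at l.
rewrite !big_cons /eval_word /= -/(eval_word zeta6 w) mulmxA vl -scalemxAl vw.
by rewrite scalerA -exprD det_mulmx detl detw -exprD addnACA.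
Qed.

Lemma mxtrace_eval_word w :
  \tr (eval_word zeta6 w) = zeta6 ^+ word_eig_exp w + zeta6 ^+ word_coeig_exp w.
Proof.
have [vw detw] := eigenrow_eval_word w.
apply: mxtrace_mx22_eigen eigenrow_neq0 _ vw _.
  by rewrite expf_neq0 ?zeta6_neq0.
by rewrite -exprD.
Qed.

Lemma Gspec_zeta6_traces (t : algC) :
  (exists M, Gspec zeta6 M /\ \tr M = t) <->
  exists i j : nat, t = zeta6 ^+ i + zeta6 ^+ j.
Proof.
split=> [[_ [[w ->] <-]]|[i [j ->]]].
  by exists (word_eig_exp w), (word_coeig_exp w); rewrite mxtrace_eval_word.
pose w := nseq j (true, false) ++ nseq (i + 2 * j) (false, false).
exists (eval_word zeta6 w); split; first by exists w.
rewrite mxtrace_eval_word /word_eig_exp /word_coeig_exp !big_cat !big_nseq /=.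
rewrite !iter_addn_0 !mul1n mul0n addn0 addnCA -mulnDl.
by rewrite exprD exprM zeta6_exp6 expr1n mulr1.
Qed.

Lemma zeta6_exp_ord n : exists j : 'I_6, zeta6 ^+ n = zeta6 ^+ j.
Proof.
by exists (Ordinal (ltn_pmod n (isT : (0 < 6)%N))); rewrite (expr_mod _ zeta6_exp6).
Qed.

Section ListedTraces.
Variable z12 : algC.
Hypothesis z12_prim : 12.-primitive_root z12.

Definition listed_trace (t : algC) : Prop :=
  t = 0 \/ exists j : 'I_6,
    let c := zeta6 ^+ j in t = c \/ t = sqrtC 3 * z12 * c \/ t = 2 * c.

Lemma prim12_sqr : z12 ^+ 2 = zeta6 \/ z12 ^+ 2 = zeta6 ^+ 5.
Proof.
set y := z12 ^+ 2.
have y6 : y ^+ 6 = 1 by rewrite -exprM prim_expr_order.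
have y3 : y ^+ 3 != 1 by rewrite -exprM -(prim_order_dvd z12_prim).
have y2 : y ^+ 2 != 1 by rewrite -exprM -(prim_order_dvd z12_prim).
have : (y ^+ 3 - 1) * (y + 1) * ((y - zeta6) * (y - zeta6 ^+ 5)) = y ^+ 6 - 1.
  by ring: zeta6_sqr.
rewrite y6 subrr => /eqP; rewrite !mulf_eq0 !subr_eq0 (negbTE y3) addr_eq0 /=.
case/or3P => /eqP y_eq; [|by left|by right].
by move: y2; rewrite y_eq sqrrN expr1n eqxx.
Qed.

Lemma sqrt3_prim12 : exists m, sqrtC 3 * z12 = (1 + zeta6 ^+ 5) * zeta6 ^+ m.
Proof.
have [m sq_eq] :
    exists m, (sqrtC 3 * z12) ^+ 2 = ((1 + zeta6 ^+ 5) * zeta6 ^+ m) ^+ 2.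
  rewrite exprMn sqrtCK; case: prim12_sqr => ->; [exists 1%N | exists 0%N];
    ring: zeta6_sqr.
move/eqP: sq_eq; rewrite eqf_sqr => /orP[/eqP-> | /eqP->]; first by exists m.
by exists (m + 3)%N; rewrite exprD zeta6_cube; ring.
Qed.

Lemma listed_pow t n : t = zeta6 ^+ n -> listed_trace t.
Proof. by have [j ->] := zeta6_exp_ord n; right; exists j; left. Qed.

Lemma listed_2pow t n : t = 2 * zeta6 ^+ n -> listed_trace t.
Proof. by have [j ->] := zeta6_exp_ord n; right; exists j; right; right. Qed.

Lemma listed_sqrt3 t n : t = (1 + zeta6 ^+ 5) * zeta6 ^+ n -> listed_trace t.
Proof.
have [m sqrt3_eq] := sqrt3_prim12; have [j j_eq] := zeta6_exp_ord (n + 5 * m).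
move=> ->; right; exists j; right; left.
rewrite -j_eq sqrt3_eq -mulrA -exprD addnCA -mulSn.
by rewrite exprD exprM zeta6_exp6 expr1n mulr1.
Qed.

Lemma listed_two_pow_sum i j : listed_trace (zeta6 ^+ i + zeta6 ^+ j).
Proof.
have -> : zeta6 ^+ j = zeta6 ^+ i * zeta6 ^+ ((j + 5 * i) %% 6).
  rewrite (expr_mod _ zeta6_exp6) -exprD addnCA -mulSn.
  by rewrite exprD exprM zeta6_exp6 expr1n mulr1.
have : ((j + 5 * i) %% 6 < 6)%N by rewrite ltn_pmod.
case: (_ %% 6)%N => [|[|[|[|[|[|//]]]]]] _.
- by apply: (listed_2pow (n := i)); rewrite expr0; ring.
- by apply: (listed_sqrt3 (n := i + 1)); rewrite exprD; ring: zeta6_sqr.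
- by apply: (listed_pow (n := i + 1)); rewrite exprD; ring: zeta6_sqr.
- by left; rewrite zeta6_cube; ring.
- by apply: (listed_pow (n := i + 5)); rewrite exprD; ring: zeta6_sqr.
- by apply: (listed_sqrt3 (n := i)); ring.
Qed.

Lemma listed_traceP t :
  (exists i j, t = zeta6 ^+ i + zeta6 ^+ j) <-> listed_trace t.
Proof.
split=> [[i [j ->]]|]; first exact: listed_two_pow_sum.
case=> [->|[j /= [->|[->|->]]]].
- by exists 0%N, 3%N; rewrite zeta6_cube; ring.
- by exists (j + 1)%N, (j + 5)%N; rewrite !exprD; ring: zeta6_sqr.
- have [m ->] := sqrt3_prim12.
  by exists (m + j)%N, (m + j + 5)%N; rewrite !exprD; ring.
- by exists j, j; ring.
Qed.
End ListedTraces.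

Theorem theorem1p3 (z12 : algC) (hz12 : 12.-primitive_root z12) (t : algC) :
  (exists M : 'M[algC]_2, Gspec (- omega) M /\ \tr M = t) <->
  (t = 0 \/
   exists j : 'I_6,
     let c := (- omega) ^+ j in
     t = c \/ t = sqrtC 3 * z12 * c \/ t = 2 * c).
Proof.
exact: iff_trans (Gspec_zeta6_traces t) (listed_traceP hz12 t).
Qed.
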